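(* Let $n\ge4$ be an even integer. For $1\le r\le n-1$ let $U^r_n=\{(k,a,b)\in(\mathbb{R}\setminus(B_n\cup C_n))\times\mathbb{R}\times\mathbb{R}: k\neq0,\ \mathrm{rank}(B^{(k,a,b)}_n)\le r,\ 4a^3+27b^2=0\}\setminus\{(k,0,0):k\in\mathbb{R}\}$. Then (a) $U^{n-1}_n=\{(k,a^{(n)}_{k,2},b^{(n)}_{k,2}): k\in\mathbb{R}\setminus(B_n\cup C_n)\}\cup\{(k,a^{(n)}_{k,3},b^{(n)}_{k,3}): k\in\mathbb{R}\setminus(B_n\cup C_n)\}$; (b) the matrix $B^{(k,a,b)}_n$ has rank exactly $n-1$ for all but finitely many triples $(k,a,b)\in U^{n-1}_n$; (c) for each $1\le r\le n-2$, the matrix $B^{(k,a,b)}_n$ has rank $r$ for only finitely many triples $(k,a,b)\in U^{n-1}_n$.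
   Context: For real $k,a,b$, the generalized $k$-FL sequence is $S^{(a,b)}_{k,0}=2b$, $S^{(a,b)}_{k,1}=bk+a$, $S^{(a,b)}_{k,m}=kS^{(a,b)}_{k,m-1}+S^{(a,b)}_{k,m-2}$. $B^{(k,a,b)}_n$ is the $n\times n$ circulant matrix whose $(i,j)$ entry is $S^{(a,b)}_{k,j-i+1}$ if $j\ge i$ and $S^{(a,b)}_{k,n+j-i+1}$ if $j<i$. Define $f_m,g_m\in\mathbb{Z}[T]$ by $f_0=0,f_1=1,g_0=2,g_1=T$, $f_m=Tf_{m-1}+f_{m-2}$, $g_m=Tg_{m-1}+g_{m-2}$; $F_n=f_{n+1}-f_n$, $G_n=g_{n+1}-g_n$, $P_n=f_{n+1}+f_n$, $Q_n=g_{n+1}+g_n$. $B_n=\{k: F_n(k)-1=0\text{ or }G_n(k)-k+2=0\}$, $C_n=\{k: P_n(k)-1=0\text{ or }Q_n(k)-k-2=0\}$. Type 2 pair: $a^{(n)}_{k,2}=-\frac{27(F_n(k)-1)^2}{4(G_n(k)-k+2)^2}$, $b^{(n)}_{k,2}=\frac{27(F_n(k)-1)^3}{4(G_n(k)-k+2)^3}$; Type 3 pair: $a^{(n)}_{k,3}=-\frac{27(P_n(k)-1)^2}{4(Q_n(k)-k-2)^2}$, $b^{(n)}_{k,3}=\frac{27(P_n(k)-1)^3}{4(Q_n(k)-k-2)^3}$. The condition $4a^3+27b^2=0$ means the curve $y^2=x^3+ax+b$ is singular. *)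

From HB Require Import structures.
From mathcomp Require Import all_boot all_order all_algebra.
From mathcomp Require Import reals.
Set Implicit Arguments. Unset Strict Implicit. Unset Printing Implicit Defensive.
Import Order.TTheory GRing.Theory Num.Theory.
Local Open Scope ring_scope.

Section FL.
Variable R : realType.

Fixpoint FLpair (k a b : R) (m : nat) : R * R :=
  match m with
  | 0 => (2 * b, b * k + a)
  | m'.+1 => let: (x, y) := FLpair k a b m' in (y, k * y + x)
  end.

Definition FLseq (k a b : R) (m : nat) : R := (FLpair k a b m).1.

(* the n x n circulant matrix B_n^{(k,a,b)} (0-based indices) *)
Definition Bmat (n : nat) (k a b : R) : 'M[R]_n :=
  \matrix_(i < n, j < n)
    (if (i <= j)%N then FLseq k a b (j - i + 1)%N
     else FLseq k a b (n + j - i + 1)%N).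

End FL.

Fixpoint recpair (p0 p1 : {poly int}) (m : nat) : {poly int} * {poly int} :=
  match m with
  | 0 => (p0, p1)
  | m'.+1 => let: (x, y) := recpair p0 p1 m' in (y, 'X * y + x)
  end.

Definition fpol (m : nat) : {poly int} := (recpair 0 1 m).1.
Definition gpol (m : nat) : {poly int} := (recpair 2%:P 'X m).1.

Definition Fpol (n : nat) : {poly int} := fpol n.+1 - fpol n.
Definition Gpol (n : nat) : {poly int} := gpol n.+1 - gpol n.
Definition Ppol (n : nat) : {poly int} := fpol n.+1 + fpol n.
Definition Qpol (n : nat) : {poly int} := gpol n.+1 + gpol n.

Definition peval (R : realType) (p : {poly int}) (k : R) : R :=
  (map_poly (fun z : int => z%:~R) p).[k].

Section Sets.
Variable R : realType.

Definition inB (n : nat) (k : R) : Prop :=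
  peval (Fpol n) k - 1 = 0 \/ peval (Gpol n) k - k + 2 = 0.
Definition inC (n : nat) (k : R) : Prop :=
  peval (Ppol n) k - 1 = 0 \/ peval (Qpol n) k - k - 2 = 0.

Definition a2 (n : nat) (k : R) : R :=
  - (27 * (peval (Fpol n) k - 1) ^+ 2) / (4 * (peval (Gpol n) k - k + 2) ^+ 2).
Definition b2 (n : nat) (k : R) : R :=
  (27 * (peval (Fpol n) k - 1) ^+ 3) / (4 * (peval (Gpol n) k - k + 2) ^+ 3).
Definition a3 (n : nat) (k : R) : R :=
  - (27 * (peval (Ppol n) k - 1) ^+ 2) / (4 * (peval (Qpol n) k - k - 2) ^+ 2).
Definition b3 (n : nat) (k : R) : R :=
  (27 * (peval (Ppol n) k - 1) ^+ 3) / (4 * (peval (Qpol n) k - k - 2) ^+ 3).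

Definition Uset (n r : nat) (t : R * R * R) : Prop :=
  let: (k, a, b) := t in
  [/\ ~ (inB n k \/ inC n k), k != 0,
      (\rank (Bmat n k a b) <= r)%N,
      4 * a ^+ 3 + 27 * b ^+ 2 = 0
    & ~ (a = 0 /\ b = 0)].

End Sets.

From HB Require Import structures.
From mathcomp Require Import all_boot all_order all_algebra.
From mathcomp Require Import reals polyrcf.
From mathcomp Require Import ring lra zify.
Set Implicit Arguments. Unset Strict Implicit. Unset Printing Implicit Defensive.
Import Order.TTheory GRing.Theory Num.Theory.
Local Open Scope ring_scope.

(* Write S_m = a f_m(k) + b g_m(k).  For k != 0 the circulant matrix of the recurrence
   S_(m+2) = k S_(m+1) + S_m is invertible, and multiplying B by it leaves the cyclic
   bidiagonal matrix A I + D P, where A = S_1 - S_(n+1), D = S_0 - S_n and P is the cyclic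
   shift.  A I + D P has rank at least n - 1 unless A = D = 0 and, n being even, rank at
   most n - 1 exactly when A = D or A = -D, i.e. when (a, b) lies on one of the lines
   a (F_n - 1) + b (G_n - k + 2) = 0 or a (P_n - 1) + b (Q_n - k - 2) = 0.  Intersecting
   such a line with the cuspidal cubic 4 a^3 + 27 b^2 = 0 gives the two parametrised pairs.
   If the rank drops below n - 1, (a, b) lies on both lines, whose determinant is
   -4 (g_n(k) - 2) by Cassini's identity, so k is one of the finitely many roots of g_n - 2. *)

Section CyclicIndex.
Variable n : nat.

Lemma ord_predE (j : 'I_n) :
  (ord_pred j : nat) = if (j : nat) == 0%N then n.-1 else (j : nat).-1.
Proof.
rewrite /ord_pred /=; have := ltn_ord j.
case: eqP => [->|hj] hjn; first by rewrite add0n modn_small //; lia.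
have -> : ((j + n).-1 = (j : nat).-1 + n)%N by lia.
by rewrite modnDr modn_small //; lia.
Qed.

Definition cdist (i j : 'I_n) : nat := if (i <= j)%N then (j - i)%N else (n + j - i)%N.

Lemma cdist_lt i j : (cdist i j < n)%N.
Proof. rewrite /cdist; have := ltn_ord i; have := ltn_ord j; case: (leqP i j); lia. Qed.

Lemma cdist_pred i j :
  cdist i (ord_pred j) = if cdist i j == 0%N then n.-1 else (cdist i j).-1.
Proof.
rewrite /cdist ord_predE; have := ltn_ord i; have := ltn_ord j.
case: (eqVneq (j : nat) 0%N) => [->|hj] hjn hin.
  by case: (leqP i 0%N) => hi0; case: (leqP i n.-1) => hi1; case: eqP; lia.
by case: (leqP i j) => hij; case: (leqP i (j : nat).-1) => hi1; case: eqP; lia.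
Qed.

Lemma cdist_eq0 i j : (cdist i j == 0%N) = (i == j).
Proof.
rewrite /cdist; have := ltn_ord i; have := ltn_ord j.
case: (eqVneq i j) => [->|hij]; first by rewrite leqnn subnn.
have hij' : (i : nat) != j by [].
by case: (leqP i j); lia.
Qed.

Lemma cdist_eq1 i j : (1 < n)%N -> (cdist i j == 1%N) = (i == ord_pred j).
Proof.
move=> n_gt1.
rewrite -cdist_eq0 cdist_pred; have := cdist_lt i j; case: (cdist i j) => [|[|m]] //= _.
by symmetry; apply/negbTE; lia.
Qed.

Lemma sum_ord_pred (V : nmodType) (F : 'I_n -> V) :
  \sum_j F (ord_pred j) = \sum_j F j.
Proof. by rewrite [RHS](reindex_inj (@ord_pred_inj n)). Qed.

End CyclicIndex.

Lemma sum_mul_eq_indicator (R : pzSemiRingType) (I : finType) (u : I -> R) j :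
  \sum_i u i * (i == j)%:R = u j.
Proof.
rewrite (bigD1 j) //= eqxx mulr1 big1 ?addr0 // => i /negbTE ->.
by rewrite mulr0.
Qed.

Lemma sum_sqr_eq0 (R : realDomainType) (I : finType) (v : I -> R) :
  \sum_i v i ^+ 2 = 0 -> forall i, v i = 0.
Proof.
move=> /psumr_eq0P sq0 i; apply/eqP; rewrite -sqrf_eq0; apply/eqP.
by apply: sq0 => // l _; rewrite sqr_ge0.
Qed.

Lemma rank_le_pred_of_ker (F : fieldType) n (M : 'M[F]_n) (w : 'rV_n) :
  w != 0 -> w *m M = 0 -> (\rank M <= n.-1)%N.
Proof.
move=> w0 wM0; have : ~~ row_free M.
  by apply: contra w0 => /row_free_inj injM; apply/eqP/injM; rewrite wM0 mul0mx.
by rewrite /row_free; have := rank_leq_row M; lia.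
Qed.

Lemma rank_ge_pred_of_ker_coord (F : fieldType) n (M : 'M[F]_n) (i0 : 'I_n) :
  (forall u : 'rV_n, u *m M = 0 -> u 0 i0 = 0 -> u = 0) -> (n.-1 <= \rank M)%N.
Proof.
move=> ker_coord; pose e : 'cV[F]_n := delta_mx i0 0.
have capK0 : (kermx M :&: kermx e)%MS = 0.
  apply/row_matrixP => i; rewrite row0; apply: ker_coord.
    by apply/sub_kermxP; apply: submx_trans (row_sub i _) (capmxSl _ _).
  have /sub_kermxP : (row i (kermx M :&: kermx e) <= kermx e)%MS.
    exact: submx_trans (row_sub i _) (capmxSr _ _).
  by rewrite -colE => /matrixP /(_ 0 0); rewrite !mxE.
have := mxrank_mul_ker (kermx M) e; rewrite capK0 mxrank0 addn0 mxrank_ker.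
by have := rank_leq_col (kermx M *m e); lia.
Qed.

Section CyclicBidiagonal.
Variables (F : fieldType) (n : nat).
Hypothesis n_gt0 : (0 < n)%N.

Definition cbidiag (al be : F) : 'M[F]_n :=
  \matrix_(i, j) (al * (i == j)%:R + be * (i == ord_pred j)%:R).

Lemma mulmx_cbidiag m (u : 'M_(m, n)) al be i j :
  (u *m cbidiag al be) i j = al * u i j + be * u i (ord_pred j).
Proof.
rewrite mxE; under eq_bigr do rewrite mxE mulrDr mulrCA [u i _ * (be * _)]mulrCA.
by rewrite big_split /= -!mulr_sumr !sum_mul_eq_indicator.
Qed.

Lemma cbidiag_rank_ge al be :
  (al != 0) || (be != 0) -> (n.-1 <= \rank (cbidiag al be))%N.
Proof.
move=> albe0; apply: (rank_ge_pred_of_ker_coord (i0 := Ordinal n_gt0)) => u uM0 u0.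
have rec j : al * u 0 j + be * u 0 (ord_pred j) = 0.
  by rewrite -mulmx_cbidiag uM0 mxE.
apply/rowP => j; rewrite mxE; have [al0|al0] := eqVneq al 0.
  have be0 : be != 0 by rewrite al0 eqxx in albe0.
  move: (rec (ordS j)); rewrite al0 mul0r add0r ordSK => /eqP.
  by rewrite mulf_eq0 (negbTE be0) => /eqP.
case: j => m; elim: m => [|m IH] hm.
  by rewrite -u0; congr (u 0 _); apply: val_inj.
move: (rec (Ordinal hm)).
have -> : ord_pred (Ordinal hm) = Ordinal (ltnW hm).
  by apply: val_inj; rewrite [LHS]ord_predE.
by rewrite IH mulr0 addr0 => /eqP; rewrite mulf_eq0 (negbTE al0) => /eqP.
Qed.

Lemma cbidiag_rank_le al be :
  ~~ odd n -> (al == be) || (al == - be) -> (\rank (cbidiag al be) <= n.-1)%N.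
Proof.
move=> n_even /orP[/eqP->|/eqP->].
  apply: (rank_le_pred_of_ker (w := \row_(j < n) (-1) ^+ j)).
    by apply/eqP => /rowP /(_ (Ordinal n_gt0)); rewrite !mxE expr0 => /eqP; rewrite oner_eq0.
  apply/rowP => j; rewrite mulmx_cbidiag !mxE -mulrDr ord_predE.
  have [->|j0] := eqVneq (j : nat) 0%N.
    have n1_odd : odd n.-1 by case: (n) n_gt0 n_even => //= ? _ /negbNE.
    by rewrite /= expr0 -signr_odd n1_odd expr1 subrr mulr0.
  by rewrite -[in (-1) ^+ j](prednK (n := j)) ?lt0n // exprS mulN1r addNr mulr0.
apply: (rank_le_pred_of_ker (w := const_mx 1)).
  by apply/eqP => /rowP /(_ (Ordinal n_gt0)); rewrite !mxE => /eqP; rewrite oner_eq0.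
by apply/rowP => j; rewrite mulmx_cbidiag !mxE mulNr addNr.
Qed.

Lemma cbidiag_rank_lt_pred al be :
  (\rank (cbidiag al be) < n.-1)%N -> al = 0 /\ be = 0.
Proof.
move=> rk_lt; have : ~~ ((al != 0) || (be != 0)).
  by apply: contraTN rk_lt => /cbidiag_rank_ge; rewrite -leqNgt.
by rewrite negb_or !negbK => /andP[/eqP-> /eqP->].
Qed.

End CyclicBidiagonal.

Lemma cbidiag_free (R : realFieldType) n (al be : R) :
  al ^+ 2 != be ^+ 2 -> row_free (cbidiag n al be).
Proof.
move=> albe; apply: inj_row_free => u uM0.
have rec j : al * u 0 j = - (be * u 0 (ord_pred j)).
  by apply/eqP; rewrite -addr_eq0 -mulmx_cbidiag uM0 mxE.
have : (al ^+ 2 - be ^+ 2) * \sum_j u 0 j ^+ 2 = 0.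
  rewrite mulrBl -{2}(sum_ord_pred (fun j => u 0 j ^+ 2)) !mulr_sumr -sumrB.
  by rewrite big1 // => j _; rewrite -!exprMn rec sqrrN subrr.
move/eqP; rewrite mulf_eq0 subr_eq0 (negbTE albe) /= => /eqP /sum_sqr_eq0 u0.
by apply/rowP => j; rewrite u0 mxE.
Qed.

Lemma cbidiag_rank_le_pred (R : realFieldType) n (al be : R) : (0 < n)%N -> ~~ odd n ->
  (\rank (cbidiag n al be) <= n.-1)%N = (al == be) || (al == - be).
Proof.
move=> n_gt0 n_even; apply/idP/idP; last exact: cbidiag_rank_le.
by rewrite -eqf_sqr; apply: contraLR => /cbidiag_free /eqP ->; lia.
Qed.

Section CirculantRecurrence.
Variables (F : fieldType) (n : nat).

Definition circ (x : nat -> F) : 'M[F]_n := \matrix_(i, j) x (cdist i j).+1.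

Definition rec_mx (k : F) : 'M[F]_n := \matrix_(i, j)
  ((i == j)%:R - k * (i == ord_pred j)%:R - (i == ord_pred (ord_pred j))%:R).

Lemma mulmx_rec_mx m (u : 'M_(m, n)) k i j :
  (u *m rec_mx k) i j = u i j - k * u i (ord_pred j) - u i (ord_pred (ord_pred j)).
Proof.
rewrite mxE; under eq_bigr do rewrite mxE !mulrBr mulrCA.
by rewrite !sumrB -mulr_sumr !sum_mul_eq_indicator.
Qed.

Lemma circ_mul_rec_mx k (x : nat -> F) :
  (1 < n)%N -> (forall m, x m.+2 = k * x m.+1 + x m) ->
  circ x *m rec_mx k = cbidiag n (x 1%N - x n.+1) (x 0%N - x n).
Proof.
move=> n_gt1 xrec; apply/matrixP => i j.
rewrite mulmx_rec_mx !mxE -(cdist_eq0 i j) -(cdist_eq1 i j n_gt1) !cdist_pred.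
have xn1 : x n.+1 = k * x n + x n.-1.
  by have := xrec n.-1; rewrite prednK => [//|]; lia.
have := cdist_lt i j; case: (cdist i j) => [|[|m]] dm /=.
- rewrite (_ : n.-1 == 0 = false); last by apply/negbTE; lia.
  by rewrite (_ : n.-2.+1 = n.-1) ?prednK ?xn1 //; [ring | lia].
- by rewrite prednK ?xrec; [ring | lia].
- by rewrite xrec; ring.
Qed.

End CirculantRecurrence.

Lemma rec_mx_free (R : realFieldType) n (k : R) : k != 0 -> row_free (rec_mx n k).
Proof.
move=> k0; apply: inj_row_free => u uN0.
pose v j := u 0 j.
have rec j : v j - k * v (ord_pred j) - v (ord_pred (ord_pred j)) = 0.
  by rewrite -mulmx_rec_mx uN0 mxE.
(* multiply the j-th equation by v (ord_pred j) and sum over j: after cyclic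
   reindexing the cross terms cancel, leaving - k times the sum of squares *)
have : \sum_j v (ord_pred j) * (v j - k * v (ord_pred j) - v (ord_pred (ord_pred j)))
       = - k * \sum_j v j ^+ 2.
  under eq_bigr do rewrite !mulrBr [v _ * (k * _)]mulrCA -expr2.
  rewrite !sumrB -mulr_sumr (sum_ord_pred (fun j => v j ^+ 2)).
  rewrite (sum_ord_pred (fun j => v j * v (ord_pred j))).
  under [X in X - _ - _]eq_bigr do rewrite mulrC.
  by rewrite addrAC subrr sub0r mulNr.
rewrite big1 => [/esym/eqP|j _]; last by rewrite rec mulr0.
rewrite mulf_eq0 oppr_eq0 (negbTE k0) /= => /eqP /sum_sqr_eq0 v0.
by apply/rowP => j; rewrite mxE; apply: v0.
Qed.

Lemma recpairSS p0 p1 m :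
  (recpair p0 p1 m.+2).1 = 'X * (recpair p0 p1 m.+1).1 + (recpair p0 p1 m).1.
Proof. by rewrite /=; case: (recpair p0 p1 m). Qed.

Section FLEvaluation.
Variables (R : realType) (k : R).

Local Notation f m := (peval (fpol m) k).
Local Notation g m := (peval (gpol m) k).

Lemma pevalD p q : peval (p + q) k = peval p k + peval q k.
Proof. by rewrite /peval rmorphD hornerD. Qed.

Lemma pevalB p q : peval (p - q) k = peval p k - peval q k.
Proof. by rewrite /peval rmorphB hornerD hornerN. Qed.

Lemma peval_fpolSS m : f m.+2 = k * f m.+1 + f m.
Proof. by rewrite /fpol recpairSS /peval rmorphD rmorphM /= map_polyX !hornerE. Qed.

Lemma peval_gpolSS m : g m.+2 = k * g m.+1 + g m.
Proof. by rewrite /gpol recpairSS /peval rmorphD rmorphM /= map_polyX !hornerE. Qed.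

Lemma peval_fpol0 : f 0 = 0. Proof. by rewrite /peval rmorph0 horner0. Qed.
Lemma peval_fpol1 : f 1 = 1. Proof. by rewrite /peval rmorph1 hornerC. Qed.
Lemma peval_gpol0 : g 0 = 2. Proof. by rewrite /peval map_polyC hornerC. Qed.
Lemma peval_gpol1 : g 1 = k. Proof. by rewrite /peval map_polyX hornerX. Qed.

Lemma peval_gpol m : g m = 2 * f m.+1 - k * f m.
Proof.
suff : g m = 2 * f m.+1 - k * f m /\ g m.+1 = 2 * f m.+2 - k * f m.+1 by case.
elim: m => [|m [IH1 IH2]].
  by rewrite peval_gpol0 peval_gpol1 peval_fpolSS peval_fpol1 peval_fpol0; split; ring.
by split => //; rewrite peval_gpolSS IH1 IH2 !peval_fpolSS; ring.
Qed.

Lemma peval_fpol_cassini m : f m.+1 ^+ 2 - k * f m.+1 * f m - f m ^+ 2 = (-1) ^+ m.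
Proof.
elim: m => [|m IH]; first by rewrite peval_fpol1 peval_fpol0; ring.
by rewrite [(-1) ^+ _]exprS -IH peval_fpolSS; ring.
Qed.

Lemma FLseqSS a b m : FLseq k a b m.+2 = k * FLseq k a b m.+1 + FLseq k a b m.
Proof. by rewrite /FLseq /=; case: (FLpair k a b m). Qed.

Lemma FLseqE a b m : FLseq k a b m = a * f m + b * g m.
Proof.
suff : FLseq k a b m = a * f m + b * g m /\ FLseq k a b m.+1 = a * f m.+1 + b * g m.+1.
  by case.
elim: m => [|m [IH1 IH2]].
  by rewrite /FLseq /= peval_fpol0 peval_fpol1 peval_gpol0 peval_gpol1; split; ring.
by split => //; rewrite FLseqSS IH1 IH2 peval_fpolSS peval_gpolSS; ring.
Qed.

End FLEvaluation.

Lemma peval_fpol_at0 (R : realType) m : peval (fpol m) (0 : R) = (odd m)%:R.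
Proof.
suff : peval (fpol m) (0 : R) = (odd m)%:R /\ peval (fpol m.+1) (0 : R) = (odd m.+1)%:R.
  by case.
elim: m => [|m [IH1 IH2]]; first by rewrite peval_fpol0 peval_fpol1.
by split => //; rewrite peval_fpolSS mul0r add0r IH1 /=; case: (odd m).
Qed.

Lemma peval_gpol_at1_ge3 (R : realType) m : 3 <= peval (gpol m.+2) (1 : R).
Proof.
suff : 1 <= peval (gpol m.+1) (1 : R) /\ 3 <= peval (gpol m.+2) (1 : R) by case.
elim: m => [|m [IH1 IH2]].
  by rewrite !peval_gpolSS peval_gpol1 peval_gpol0; split; lra.
by rewrite [peval (gpol m.+3) _]peval_gpolSS; split; lra.
Qed.

Lemma cusp_on_line (R : numFieldType) (al be a b : R) : al != 0 -> be != 0 ->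
  [/\ a * al + b * be = 0, 4 * a ^+ 3 + 27 * b ^+ 2 = 0 & ~ (a = 0 /\ b = 0)] <->
  a = - (27 * al ^+ 2) / (4 * be ^+ 2) /\ b = 27 * al ^+ 3 / (4 * be ^+ 3).
Proof.
move=> al0 be0; split => [[line disc ab0]|[-> ->]]; last first.
  split; [by field | by field | case=> a0 _].
  move: a0 => /eqP; rewrite mulf_eq0 invr_eq0 oppr_eq0 !mulf_eq0.
  by rewrite (negbTE al0) (negbTE be0) !pnatr_eq0.
have eb : b = - (a * al) / be.
  by apply: (canRL (mulfK be0)); apply/eqP; rewrite -addr_eq0 addrC line.
have a0 : a != 0.
  by apply/eqP => a0; apply: ab0; split => //; rewrite eb a0 mul0r oppr0 mul0r.
have ea : a = - (27 * al ^+ 2) / (4 * be ^+ 2).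
  have : a ^+ 2 * (4 * a * be ^+ 2 + 27 * al ^+ 2) = 0.
    by rewrite -[RHS](mulr0 (be ^+ 2)) -disc eb; field.
  move/eqP; rewrite mulf_eq0 sqrf_eq0 (negbTE a0) /= addr_eq0 => /eqP ea.
  by rewrite -ea; field.
by split => //; rewrite eb ea; field.
Qed.

Lemma det2_eq0_of_nontrivial_solution (R : idomainType) (al be ga de a b : R) :
  a * al + b * be = 0 -> a * ga + b * de = 0 -> ~ (a = 0 /\ b = 0) ->
  al * de - be * ga = 0.
Proof.
move=> line1 line2 ab0.
have ha : a * (al * de - be * ga) = de * (a * al + b * be) - be * (a * ga + b * de).
  by ring.
have hb : b * (al * de - be * ga) = al * (a * ga + b * de) - ga * (a * al + b * be).
  by ring.
rewrite line1 line2 !mulr0 subrr in ha hb.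
have [a0|a0] := eqVneq a 0.
  have b0 : b != 0 by apply/eqP => b0; apply: ab0.
  by move/eqP: hb; rewrite mulf_eq0 (negbTE b0) => /eqP.
by move/eqP: ha; rewrite mulf_eq0 (negbTE a0) => /eqP.
Qed.

Section FLCirculant.
Variables (R : realType) (n : nat).
Hypotheses (n_gt1 : (1 < n)%N) (n_even : ~~ odd n).
Implicit Types k a b : R.

Lemma Bmat_circ k a b : Bmat n k a b = circ n (FLseq k a b).
Proof. by apply/matrixP => i j; rewrite !mxE /cdist; case: ifP; rewrite addn1. Qed.

Lemma rank_Bmat k a b : k != 0 ->
  \rank (Bmat n k a b) = \rank (cbidiag n (FLseq k a b 1 - FLseq k a b n.+1)
                                          (FLseq k a b 0 - FLseq k a b n)).
Proof.
move=> k0; rewrite Bmat_circ -(mxrankMfree _ (rec_mx_free n k0)).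
by rewrite (circ_mul_rec_mx n_gt1 (FLseqSS k a b)).
Qed.

Lemma FLseq_wrap_sub k a b :
  (FLseq k a b 0 - FLseq k a b n) - (FLseq k a b 1 - FLseq k a b n.+1) =
  a * (peval (Fpol n) k - 1) + b * (peval (Gpol n) k - k + 2).
Proof.
rewrite /Fpol /Gpol !pevalB !FLseqE peval_fpol0 peval_fpol1 peval_gpol0 peval_gpol1.
by ring.
Qed.

Lemma FLseq_wrap_add k a b :
  - ((FLseq k a b 1 - FLseq k a b n.+1) + (FLseq k a b 0 - FLseq k a b n)) =
  a * (peval (Ppol n) k - 1) + b * (peval (Qpol n) k - k - 2).
Proof.
rewrite /Ppol /Qpol !pevalD !FLseqE peval_fpol0 peval_fpol1 peval_gpol0 peval_gpol1.
by ring.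
Qed.

Lemma rank_Bmat_le_pred k a b : k != 0 ->
  (\rank (Bmat n k a b) <= n.-1)%N <->
  a * (peval (Fpol n) k - 1) + b * (peval (Gpol n) k - k + 2) = 0 \/
  a * (peval (Ppol n) k - 1) + b * (peval (Qpol n) k - k - 2) = 0.
Proof.
move=> k0; rewrite rank_Bmat // cbidiag_rank_le_pred 1?ltnW //.
rewrite -FLseq_wrap_sub -FLseq_wrap_add.
split => [/orP[]/eqP->|[/eqP|/eqP]].
- by left; rewrite subrr.
- by right; rewrite addNr oppr0.
- by rewrite subr_eq0 eq_sym => ->.
- by rewrite oppr_eq0 addr_eq0 => ->; rewrite orbT.
Qed.

Lemma rank_Bmat_lt_pred k a b : k != 0 -> (\rank (Bmat n k a b) < n.-1)%N ->
  a * (peval (Fpol n) k - 1) + b * (peval (Gpol n) k - k + 2) = 0 /\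
  a * (peval (Ppol n) k - 1) + b * (peval (Qpol n) k - k - 2) = 0.
Proof.
move=> k0; rewrite rank_Bmat // -FLseq_wrap_sub -FLseq_wrap_add.
by move=> /(cbidiag_rank_lt_pred (ltnW n_gt1))[-> ->]; rewrite subr0 addr0 oppr0.
Qed.

Lemma FLpoly_lines_det k :
  (peval (Fpol n) k - 1) * (peval (Qpol n) k - k - 2)
  - (peval (Gpol n) k - k + 2) * (peval (Ppol n) k - 1) = -4 * (peval (gpol n) k - 2).
Proof.
have cassini := peval_fpol_cassini k n.
rewrite -signr_odd (negbTE n_even) expr0 in cassini.
rewrite /Fpol /Gpol /Ppol /Qpol !pevalB !pevalD !peval_gpol !peval_fpolSS.
set f0 := peval (fpol n) k in cassini *; set f1 := peval (fpol n.+1) k in cassini *.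
apply/eqP; rewrite -subr_eq0; apply/eqP.
transitivity (4 * (f1 ^+ 2 - k * f1 * f0 - f0 ^+ 2 - 1)); first by ring.
by rewrite cassini subrr mulr0.
Qed.

Lemma inB0 : inB n (0 : R).
Proof. by left; rewrite /Fpol pevalB !peval_fpol_at0 /= (negbTE n_even) subr0 subrr. Qed.

Lemma notBC_neq0 k : ~ (inB n k \/ inC n k) ->
  [/\ k != 0, peval (Fpol n) k - 1 != 0, peval (Gpol n) k - k + 2 != 0,
      peval (Ppol n) k - 1 != 0 & peval (Qpol n) k - k - 2 != 0].
Proof.
move=> BC; split; apply/eqP => h; apply: BC; rewrite /inB /inC; try tauto.
by left; rewrite h; exact: inB0.
Qed.

Lemma Uset_pred_iff t :
  Uset n n.-1 t <->
  exists k : R, ~ (inB n k \/ inC n k) /\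
    (t = (k, a2 n k, b2 n k) \/ t = (k, a3 n k, b3 n k)).
Proof.
case: t => [[k a] b]; split.
  case=> BC k0 rk disc ab0; exists k; split => //.
  have [_ al0 be0 ga0 de0] := notBC_neq0 BC.
  case/(rank_Bmat_le_pred a b k0): rk => line.
    by left; have [-> ->] := (cusp_on_line a b al0 be0).1 (And3 line disc ab0).
  by right; have [-> ->] := (cusp_on_line a b ga0 de0).1 (And3 line disc ab0).
case=> {}k [BC [[-> -> ->]|[-> -> ->]]]; have [k0 al0 be0 ga0 de0] := notBC_neq0 BC.
  have [line disc ab0] := (cusp_on_line _ _ al0 be0).2 (conj erefl erefl).
  by split => //; apply/(rank_Bmat_le_pred _ _ k0); left.
have [line disc ab0] := (cusp_on_line _ _ ga0 de0).2 (conj erefl erefl).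
by split => //; apply/(rank_Bmat_le_pred _ _ k0); right.
Qed.

Lemma Uset_low_rank_finite :
  exists s : seq (R * R * R), forall t : R * R * R,
    Uset n n.-1 t -> (\rank (Bmat n t.1.1 t.1.2 t.2) < n.-1)%N -> t \in s.
Proof.
pose p : {poly R} := map_poly (fun z : int => z%:~R) (gpol n) - 2%:P.
have p_neq0 : p != 0.
  apply/eqP => /(congr1 (horner^~ 1)); rewrite !hornerE -/(peval (gpol n) 1).
  have := peval_gpol_at1_ge3 R n.-2; rewrite (_ : n.-2.+2 = n); last by lia.
  by move=> ? ?; lra.
exists [seq (k, a2 n k, b2 n k) | k <- rootsR p].
case=> [[k a] b] [BC k0 _ disc ab0] /= rk.
have [_ al0 be0 _ _] := notBC_neq0 BC.
have [line1 line2] := rank_Bmat_lt_pred k0 rk.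
have [-> ->] := (cusp_on_line a b al0 be0).1 (And3 line1 disc ab0).
apply: map_f; rewrite -roots_on_rootsR // in_itv /= /root !hornerE.
have := det2_eq0_of_nontrivial_solution line1 line2 ab0.
by rewrite FLpoly_lines_det => /eqP; rewrite mulf_eq0 oppr_eq0 pnatr_eq0 /= subr_eq0.
Qed.

End FLCirculant.

Theorem theorem4p14 (R : realType) (n : nat) (hn4 : (4 <= n)%N) (hev : ~~ odd n) :
  [/\ (forall t : R * R * R,
         Uset n n.-1 t <->
         exists k : R, ~ (inB n k \/ inC n k) /\
           (t = (k, a2 n k, b2 n k) \/ t = (k, a3 n k, b3 n k))),
      (exists s : seq (R * R * R), forall t : R * R * R,
         Uset n n.-1 t -> \rank (Bmat n t.1.1 t.1.2 t.2) != n.-1 -> t \in s)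
    & (forall r : nat, (1 <= r)%N -> (r <= n - 2)%N ->
         exists s : seq (R * R * R), forall t : R * R * R,
           Uset n n.-1 t -> \rank (Bmat n t.1.1 t.1.2 t.2) = r -> t \in s)].
Proof.
have n_gt1 : (1 < n)%N by lia.
have [s low_rank_in_s] := @Uset_low_rank_finite R n n_gt1 hev.
split; first exact: Uset_pred_iff.
  exists s => t Ut rk_ne; apply: (low_rank_in_s _ Ut).
  by case: t Ut rk_ne => [[k a] b] [_ _ rk_le _ _] /= rk_ne; rewrite ltn_neqAle rk_ne rk_le.
move=> r _ r_le; exists s => t Ut rk; apply: (low_rank_in_s _ Ut).
by rewrite rk; lia.
Qed.
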